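(* Let $(G,\cdot)$ be a semigroup, $(G,\curlywedge)$ a semilattice on the same set $G$, and $\xi,\delta\subseteq G\times G$ binary relations. Then $(G,\cdot,\curlywedge,\xi,\delta)$ is isomorphic to some transformative $\cap$-semigroup of transformations $(\Phi,\cdot,\cap,\xi_\Phi,\delta_\Phi)$ if and only if all of the following hold: (1) $\xi$ is left regular (i.e. $(u,v)\in\xi\Rightarrow(xu,xv)\in\xi$ for all $x,u,v\in G$) and contains the semilattice order $\zeta$; (2) $\delta$ is a left ideal of $(G,\cdot)$ (i.e. $(x,y)\in\delta\Rightarrow(ux,y)\in\delta$ for all $x,y,u\in G$); (3) for all $x,y,z,u,v\in G$: $x(y\curlywedge z)=xy\curlywedge xz$; \ $x\leqslant y\wedge u\leqslant v\wedge y\downarrow v\Rightarrow u\downarrow x$; \ $x\downarrow y\Rightarrow (x\curlywedge y)u=xu\curlywedge yu$; (4) for every positive integer $n$ and all $x,y\in G$ the following axioms hold: $A_n$: if $\mathfrak{X}_n(x\curlywedge y,\{x\})$ then $x\curlywedge y=x$; $B_n$: if $\mathfrak{X}_n(x\curlywedge y,\{x,y\})$ then $(x,y)\in\xi$; $C_n$: if $\mathfrak{X}_n(xy,\{x\})$ then $(x,y)\in\delta$.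
   Context: Notation on $G$: $x\leqslant y$ iff $x\curlywedge y=x$ (the semilattice order $\zeta$); $x\downarrow y$ iff $(x,y)\in\xi$; $x\vdash y$ iff $(x,y)\in\delta$. $G^*=G\cup\{e\}$ is the semigroup obtained by adjoining a new identity $e\notin G$, with conventions $e\leqslant e$, $e\vdash e$, and $x\vdash e$ for all $x\in G$. The formula $a\boxdot b\leqslant c$ abbreviates $a\vdash b\wedge ab\leqslant c$. For a positive integer $n$, $z\in G$ and $H\subseteq G$, $\mathfrak{X}_n(z,H)$ is the statement: there exist $x_i,y_i,t_i\in G^*$ and $u_i,v_i\in G$ ($1\le i\le 2^n-1$) such that (a) $u_1\downarrow v_1$ and $(u_1\curlywedge v_1)x_1\boxdot y_1\leqslant z t_1$; (b) for every $i$ with $1\le i\le 2^{n-1}-1$: $u_{2i}\downarrow v_{2i}$, $(u_{2i}\curlywedge v_{2i})x_{2i}\boxdot y_{2i}\leqslant u_i t_{2i}$, $u_{2i+1}\downarrow v_{2i+1}$ and $(u_{2i+1}\curlywedge v_{2i+1})x_{2i+1}\boxdot y_{2i+1}\leqslant v_i x_i t_{2i+1}$; (c) for every $i$ with $2^{n-1}\le i\le 2^n-1$: $u_i\in H$ and $v_ix_i\in H$. Transformations: for a nonempty set $A$, a transformation is a partial map $A\to A$ regarded as a subset of $A\times A$, with domain $\mathrm{pr}_1 f$ and image $\mathrm{pr}_2 f$. The product $f\cdot g$ is ''first $f$, then $g$'': $(f\cdot g)(a)=g(f(a))$, defined exactly when $a\in\mathrm{pr}_1 f$ and $f(a)\in\mathrm{pr}_1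 g$. A transformative $\cap$-semigroup of transformations is $(\Phi,\cdot,\cap,\xi_\Phi,\delta_\Phi)$ where $\Phi$ is a set of transformations of a nonempty set $A$ closed under this product and under set-theoretic intersection, $\xi_\Phi=\{(f,g):f$ and $g$ coincide on $\mathrm{pr}_1 f\cap\mathrm{pr}_1 g\}$, and $\delta_\Phi=\{(f,g):\mathrm{pr}_2 f\subseteq\mathrm{pr}_1 g\}$. *)

From Stdlib Require Import Arith.

Definition sle {G : Type} (meet : G -> G -> G) (x y : G) : Prop := meet x y = x.

(* G-star = option G, with None playing the role of the adjoined identity e.
   [act mul a t] is the product a t in G-star for a in G, t in G*. *)
Definition act {G : Type} (mul : G -> G -> G) (a : G) (t : option G) : G :=
  match t with Some t' => mul a t' | None => a end.

Definition vdashS {G : Type} (delta : G -> G -> Prop) (a : G) (b : option G) : Prop :=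
  match b with Some b' => delta a b' | None => True end.

Definition boxdot {G : Type} (mul meet : G -> G -> G) (delta : G -> G -> Prop)
  (a : G) (b : option G) (c : G) : Prop :=
  vdashS delta a b /\ sle meet (act mul a b) c.

(* The statement X_n(z, H); the families are indexed by nat, only the
   indices 1 .. 2^n - 1 matter. *)
Definition Xn {G : Type} (mul meet : G -> G -> G) (xi delta : G -> G -> Prop)
  (n : nat) (z : G) (H : G -> Prop) : Prop :=
  exists (x y t : nat -> option G) (u v : nat -> G),
    (xi (u 1) (v 1) /\
     boxdot mul meet delta (act mul (meet (u 1) (v 1)) (x 1)) (y 1) (act mul z (t 1)))
    /\ (forall i, 1 <= i <= 2 ^ (n - 1) - 1 ->
          xi (u (2 * i)) (v (2 * i)) /\
          boxdot mul meet delta (act mul (meet (u (2 * i)) (v (2 * i))) (x (2 * i)))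
                 (y (2 * i)) (act mul (u i) (t (2 * i))) /\
          xi (u (2 * i + 1)) (v (2 * i + 1)) /\
          boxdot mul meet delta
                 (act mul (meet (u (2 * i + 1)) (v (2 * i + 1))) (x (2 * i + 1)))
                 (y (2 * i + 1)) (act mul (act mul (v i) (x i)) (t (2 * i + 1))))
    /\ (forall i, 2 ^ (n - 1) <= i <= 2 ^ n - 1 ->
          H (u i) /\ H (act mul (v i) (x i))).

Definition transformation {A : Type} (f : A -> A -> Prop) : Prop :=
  forall a b c, f a b -> f a c -> b = c.

Definition tcomp {A : Type} (f g : A -> A -> Prop) : A -> A -> Prop :=
  fun a c => exists b, f a b /\ g b c.

Definition tcap {A : Type} (f g : A -> A -> Prop) : A -> A -> Prop :=
  fun a b => f a b /\ g a b.

Definition xiT {A : Type} (f g : A -> A -> Prop) : Prop :=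
  forall a b c, f a b -> g a c -> b = c.

Definition deltaT {A : Type} (f g : A -> A -> Prop) : Prop :=
  forall a b, f a b -> exists c, g b c.

Definition cap_semigroup_of_transformations {A : Type}
  (Phi : (A -> A -> Prop) -> Prop) : Prop :=
  (forall f, Phi f -> transformation f) /\
  (forall f g, Phi f -> Phi g -> Phi (tcomp f g)) /\
  (forall f g, Phi f -> Phi g -> Phi (tcap f g)).

Definition is_iso {G A : Type} (mul meet : G -> G -> G) (xi delta : G -> G -> Prop)
  (Phi : (A -> A -> Prop) -> Prop) (F : G -> A -> A -> Prop) : Prop :=
  (forall x, Phi (F x)) /\
  (forall f, Phi f -> exists x, F x = f) /\
  (forall x y, F x = F y -> x = y) /\
  (forall x y, F (mul x y) = tcomp (F x) (F y)) /\
  (forall x y, F (meet x y) = tcap (F x) (F y)) /\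
  (forall x y, xi x y <-> xiT (F x) (F y)) /\
  (forall x y, delta x y <-> deltaT (F x) (F y)).

Definition representable {G : Type} (mul meet : G -> G -> G) (xi delta : G -> G -> Prop)
  : Prop :=
  exists (A : Type), inhabited A /\
    exists (Phi : (A -> A -> Prop) -> Prop) (F : G -> A -> A -> Prop),
      cap_semigroup_of_transformations Phi /\ is_iso mul meet xi delta Phi F.

From Stdlib Require Import Arith Lia FunctionalExtensionality PropExtensionality.

(* Necessity: if both children of a node of X_n are defined at a point of the base
   set, the definedness hypotheses of the node (u ↓ v, a ⊢ b, domain shrinking along
   ≤) make its label defined there too; so X_n(z, H) forces dom z to contain every
   point where all elements of H are defined, which is what A_n, B_n, C_n say.
   Sufficiency: for H ⊆ G, call w derivable from H if X_n(w, H) holds for some n,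
   and identify p, q in G^* when p ∧ q is derivable.  Then x acts on pairs
   (H, class of a) by (H, class of a) ↦ (H, class of a x) whenever a x is derivable;
   (1)-(3) make this a representation of · and ∧, and A_n, B_n, C_n, read at the
   class of e for H = {x} or H = {x, y}, make it faithful and reflect ξ and δ. *)

Lemma rel_ext {A : Type} (f g : A -> A -> Prop) :
  (forall a b, f a b <-> g a b) -> f = g.
Proof.
  intros Hfg. apply functional_extensionality; intro a.
  apply functional_extensionality; intro b. now apply propositional_extensionality.
Qed.

(* Heap indexing: the children of node [i] are [2 i] and [2 i + 1].  [merge r L R]
   is the tree with root [r] and subtrees [L] and [R]; a node of depth [d >= 1]
   belongs to [L] iff it lies in the first half of its level. *)
Definition merge {T : Type} (r : T) (L R : nat -> T) (i : nat) : T :=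
  if i =? 1 then r else
  let d := Nat.log2 i in
  if i <? 2 ^ d + 2 ^ (d - 1) then L (i - 2 ^ (d - 1)) else R (i - 2 ^ d).

Lemma merge_level {T : Type} (r : T) L R d i : 2 * 2 ^ d <= i < 4 * 2 ^ d ->
  merge r L R i = if i <? 3 * 2 ^ d then L (i - 2 ^ d) else R (i - 2 * 2 ^ d).
Proof.
  intros Hi. unfold merge.
  assert (Hpos : 0 < 2 ^ d) by (apply Nat.neq_0_lt_0, Nat.pow_nonzero; lia).
  destruct (Nat.eqb_spec i 1) as [->|_]; [lia|].
  rewrite (Nat.log2_unique i (S d)) by (simpl; lia).
  replace (S d - 1) with d by lia.
  replace (2 ^ S d + 2 ^ d) with (3 * 2 ^ d) by (simpl; lia).
  now replace (2 ^ S d) with (2 * 2 ^ d) by (simpl; lia).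
Qed.

Lemma merge_descend i : 2 <= i -> exists j, 1 <= j /\
  (forall k, i < 2 ^ k -> j < 2 ^ (k - 1)) /\
  (forall k, 2 ^ k <= i -> 2 ^ (k - 1) <= j) /\
  ((forall T (r : T) L R, merge r L R i = L j /\ merge r L R (2 * i) = L (2 * j) /\
                          merge r L R (2 * i + 1) = L (2 * j + 1)) \/
   (forall T (r : T) L R, merge r L R i = R j /\ merge r L R (2 * i) = R (2 * j) /\
                          merge r L R (2 * i + 1) = R (2 * j + 1))).
Proof.
  intros Hi. destruct (Nat.log2_spec i) as [Hlo Hhi]; [lia|].
  destruct (Nat.log2 i) as [|d]; [simpl in Hhi; lia|].
  change (2 ^ S d) with (2 * 2 ^ d) in Hlo.
  change (2 ^ S (S d)) with (2 * (2 * 2 ^ d)) in Hhi.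
  assert (Hbounds : forall j, 2 ^ d <= j < 2 * 2 ^ d ->
    (forall k, i < 2 ^ k -> j < 2 ^ (k - 1)) /\ (forall k, 2 ^ k <= i -> 2 ^ (k - 1) <= j)).
  { intros j Hj. split; intros k Hk.
    - assert (S d < k) by (apply (Nat.pow_lt_mono_r_iff 2); [lia|]; simpl; lia).
      assert (2 ^ S d <= 2 ^ (k - 1)) by (apply Nat.pow_le_mono_r; lia).
      simpl in *; lia.
    - assert (k < S (S d)) by (apply (Nat.pow_lt_mono_r_iff 2); [lia|]; simpl; lia).
      assert (2 ^ (k - 1) <= 2 ^ d) by (apply Nat.pow_le_mono_r; lia).
      lia. }
  assert (Hmerge : forall T (r : T) L R,
    merge r L R i = (if i <? 3 * 2 ^ d then L (i - 2 ^ d) else R (i - 2 * 2 ^ d)) /\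
    merge r L R (2 * i) =
      (if 2 * i <? 3 * 2 ^ S d then L (2 * i - 2 ^ S d) else R (2 * i - 2 * 2 ^ S d)) /\
    merge r L R (2 * i + 1) =
      (if 2 * i + 1 <? 3 * 2 ^ S d then L (2 * i + 1 - 2 ^ S d)
       else R (2 * i + 1 - 2 * 2 ^ S d))).
  { intros T r L R. split; [|split]; apply merge_level; simpl; lia. }
  change (2 ^ S d) with (2 * 2 ^ d) in Hmerge.
  destruct (Nat.ltb_spec i (3 * 2 ^ d)) as [Hs|Hs];
    [exists (i - 2 ^ d) | exists (i - 2 * 2 ^ d)];
    (split; [lia|]); (split; [apply Hbounds; lia|]);
    (split; [apply Hbounds; lia|]); [left | right];
    intros T r L R; destruct (Hmerge T r L R) as [-> [-> ->]];
    repeat match goal with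
           | |- context [?a <? ?b] => destruct (Nat.ltb_spec a b); try lia
           end;
    repeat split; f_equal; lia.
Qed.

Section Derivations.

Context {G : Type} (mul meet : G -> G -> G) (xi delta : G -> G -> Prop).

(* The unbalanced form of "X_n(w, H) for some n": the tree of X_n need not be
   complete, since trivial nodes (u = v = w, no x, y, t) can pad any derivation. *)
Inductive derivable (H : G -> Prop) : G -> Prop :=
| derivable_base w : H w -> derivable H w
| derivable_node u v x y t w : xi u v ->
    boxdot mul meet delta (act mul (meet u v) x) y (act mul w t) ->
    derivable H u -> derivable H (act mul v x) -> derivable H w.

Lemma Xn_derivable n z H : 1 <= n -> Xn mul meet xi delta n z H -> derivable H z.
Proof.
  intros Hn [x [y [t [u [v [Hroot [Hinner Hleaf]]]]]]].
  set (lab := fun i => if i =? 1 then z else if Nat.even i then u (Nat.div2 i)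
                       else act mul (v (Nat.div2 i)) (x (Nat.div2 i))).
  assert (lab_even : forall i, 1 <= i -> lab (2 * i) = u i).
  { intros i Hi. unfold lab. destruct (Nat.eqb_spec (2 * i) 1); [lia|].
    now rewrite Nat.even_even, Nat.div2_double. }
  assert (lab_odd : forall i, 1 <= i -> lab (2 * i + 1) = act mul (v i) (x i)).
  { intros i Hi. unfold lab. destruct (Nat.eqb_spec (2 * i + 1) 1); [lia|].
    now rewrite Nat.even_add, Nat.even_even, Nat.div2_odd'. }
  assert (Hhalf : 2 ^ n = 2 * 2 ^ (n - 1))
    by (destruct n; [lia|]; simpl; rewrite Nat.sub_0_r; lia).
  assert (Hnode : forall i, 1 <= i < 2 ^ n -> xi (u i) (v i) /\
    boxdot mul meet delta (act mul (meet (u i) (v i)) (x i)) (y i) (act mul (lab i) (t i))).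
  { intros i Hi. destruct (Nat.eq_dec i 1) as [->|Hi1]; [exact Hroot|].
    destruct (Nat.Even_or_Odd i) as [[j ->]|[j ->]].
    - rewrite lab_even by lia. destruct (Hinner j) as [? [? _]]; [lia|]. auto.
    - rewrite lab_odd by lia. destruct (Hinner j) as [_ [_ ?]]; [lia|]. auto. }
  assert (Hall : forall k i, 1 <= i < 2 ^ n -> 2 ^ n - i = k -> derivable H (lab i)).
  { intros k. induction k as [k IH] using lt_wf_ind. intros i Hi Hk.
    destruct (Hnode i Hi) as [Huv Hbox].
    apply (derivable_node H _ _ _ _ _ _ Huv Hbox);
      (destruct (le_lt_dec (2 ^ (n - 1)) i);
       [apply derivable_base, (Hleaf i); lia|]).
    - rewrite <- lab_even by lia. apply (IH (2 ^ n - 2 * i)); lia.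
    - rewrite <- lab_odd by lia. apply (IH (2 ^ n - (2 * i + 1))); lia. }
  assert (0 < 2 ^ (n - 1)) by (apply Nat.neq_0_lt_0, Nat.pow_nonzero; lia).
  apply (Hall (2 ^ n - 1) 1); lia.
Qed.

Lemma Xn_const n w H : xi w w -> meet w w = w -> H w -> Xn mul meet xi delta n w H.
Proof.
  intros Hxi Hidem Hw.
  assert (Hsle : sle meet (meet w w) w) by (unfold sle; now rewrite !Hidem).
  exists (fun _ => None), (fun _ => None), (fun _ => None), (fun _ => w), (fun _ => w).
  repeat split; auto.
Qed.

Lemma Xn_node k H z u0 v0 x0 y0 t0 : 1 <= k -> xi u0 v0 ->
  boxdot mul meet delta (act mul (meet u0 v0) x0) y0 (act mul z t0) ->
  Xn mul meet xi delta k u0 H -> Xn mul meet xi delta k (act mul v0 x0) H ->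
  Xn mul meet xi delta (S k) z H.
Proof.
  intros Hk Huv Hbox [xL [yL [tL [uL [vL [LA [LB LC]]]]]]]
                     [xR [yR [tR [uR [vR [RA [RB RC]]]]]]].
  exists (merge x0 xL xR), (merge y0 yL yR), (merge t0 tL tR),
         (merge u0 uL uR), (merge v0 vL vR).
  replace (S k - 1) with k by lia.
  assert (Hhalf : 2 ^ k = 2 * 2 ^ (k - 1))
    by (destruct k; [lia|]; simpl; rewrite Nat.sub_0_r; lia).
  split; [exact (conj Huv Hbox)|split].
  - intros i Hi. destruct (Nat.eq_dec i 1) as [->|Hi1].
    + exact (conj (proj1 LA) (conj (proj2 LA) RA)).
    + destruct (merge_descend i) as [j [Hj [Hin [_ [Hs|Hs]]]]]; [lia| |];
        specialize (Hin k ltac:(lia));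
        rewrite !(fun T r L R => proj1 (Hs T r L R)),
                !(fun T r L R => proj1 (proj2 (Hs T r L R))),
                !(fun T r L R => proj2 (proj2 (Hs T r L R)));
        [apply LB | apply RB]; lia.
  - intros i Hi. change (2 ^ S k) with (2 * 2 ^ k) in Hi.
    assert (Hpos : 0 < 2 ^ (k - 1)) by (apply Nat.neq_0_lt_0, Nat.pow_nonzero; lia).
    destruct (merge_descend i) as [j [Hj [Hin [Hout [Hs|Hs]]]]]; [lia| |];
      specialize (Hin (S k) ltac:(simpl; lia)); specialize (Hout k ltac:(lia));
      replace (S k - 1) with k in Hin by lia;
      rewrite !(fun T r L R => proj1 (Hs T r L R));
      [apply LC | apply RC]; lia.
Qed.

Lemma derivable_Xn_eventually H w :
  (forall x, xi x x) -> (forall x, meet x x = x) -> derivable H w ->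
  exists n, 1 <= n /\ forall m, n <= m -> Xn mul meet xi delta m w H.
Proof.
  intros xi_refl meet_idem Hw.
  induction Hw as [w Hw | u v x y t w Huv Hbox _ [n1 [Hn1 IH1]] _ [n2 [Hn2 IH2]]].
  - exists 1. split; [lia|]. intros m _. now apply Xn_const.
  - exists (S (Nat.max n1 n2)). split; [lia|]. intros [|k] Hk; [lia|].
    apply (Xn_node k H w u v x y t);
      [lia | exact Huv | exact Hbox | apply IH1 | apply IH2]; lia.
Qed.

End Derivations.

Definition dom {A : Type} (f : A -> A -> Prop) (a : A) : Prop := exists b, f a b.

Section Necessity.

Context {G A : Type} (mul meet : G -> G -> G) (xi delta : G -> G -> Prop)
  (F : G -> A -> A -> Prop).

Hypothesis F_functional : forall x, transformation (F x).
Hypothesis F_inj : forall x y, F x = F y -> x = y.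
Hypothesis F_mul : forall x y, F (mul x y) = tcomp (F x) (F y).
Hypothesis F_meet : forall x y, F (meet x y) = tcap (F x) (F y).
Hypothesis F_xi : forall x y, xi x y <-> xiT (F x) (F y).
Hypothesis F_delta : forall x y, delta x y <-> deltaT (F x) (F y).

Lemma F_sle x y a b : sle meet x y -> F x a b -> F y a b.
Proof. intros Hxy Hx. rewrite <- Hxy, F_meet in Hx. apply Hx. Qed.

Lemma dom_node u v x y t w a : xi u v ->
  boxdot mul meet delta (act mul (meet u v) x) y (act mul w t) ->
  dom (F u) a -> dom (F (act mul v x)) a -> dom (F w) a.
Proof.
  intros Huv [Hy Hw] [b Hb] [c Hc]. apply F_xi in Huv.
  assert (Hx : dom (F (act mul (meet u v) x)) a).
  { destruct x as [x|]; cbn in *.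
    - rewrite F_mul in Hc. destruct Hc as [d [Hd Hc]].
      rewrite <- (Huv a b d Hb Hd) in Hc.
      exists c. rewrite F_mul, F_meet. exists b. repeat split; auto.
      now rewrite (Huv a b d Hb Hd).
    - exists b. rewrite F_meet. split; [exact Hb|]. now rewrite (Huv a b c Hb Hc). }
  assert (Hxy : dom (F (act mul (act mul (meet u v) x) y)) a).
  { destruct y as [y|]; cbn in *; [|exact Hx].
    destruct Hx as [d Hd]. apply F_delta in Hy. destruct (Hy a d Hd) as [e He].
    exists e. rewrite F_mul. now exists d. }
  destruct Hxy as [d Hd]. apply (F_sle _ _ _ _ Hw) in Hd.
  destruct t as [t|]; cbn in Hd; [rewrite F_mul in Hd; destruct Hd as [e [Hd _]]|];
    eexists; eauto.
Qed.

Lemma dom_derivable H z a : derivable mul meet xi delta H z ->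
  (forall w, H w -> dom (F w) a) -> dom (F z) a.
Proof. intros Hz HH. induction Hz; eauto using dom_node. Qed.

Lemma xi_mul_l x u v : xi u v -> xi (mul x u) (mul x v).
Proof.
  intros Huv. apply F_xi. apply F_xi in Huv.
  intros a b c Hb Hc. rewrite F_mul in Hb, Hc.
  destruct Hb as [d [Hd1 Hd2]], Hc as [e [He1 He2]].
  rewrite (F_functional x a d e Hd1 He1) in Hd2. exact (Huv e b c Hd2 He2).
Qed.

Lemma xi_of_sle x y : sle meet x y -> xi x y.
Proof.
  intros Hxy. apply F_xi. intros a b c Hb Hc.
  exact (F_functional y a b c (F_sle x y a b Hxy Hb) Hc).
Qed.

Lemma delta_mul_l x y u : delta x y -> delta (mul u x) y.
Proof.
  intros Hxy. apply F_delta. apply F_delta in Hxy.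
  intros a b Hb. rewrite F_mul in Hb. destruct Hb as [c [_ Hc]]. exact (Hxy c b Hc).
Qed.

Lemma mul_meet_distr_l x y z : mul x (meet y z) = meet (mul x y) (mul x z).
Proof.
  apply F_inj. rewrite F_mul, !F_meet, !F_mul. apply rel_ext. intros a b. split.
  - intros [c [Hc [Hy Hz]]]. split; exists c; auto.
  - intros [[c [Hc Hy]] [d [Hd Hz]]].
    rewrite (F_functional x a c d Hc Hd) in Hy. exists d. repeat split; auto.
Qed.

Lemma xi_sle_antitone x y u v : sle meet x y -> sle meet u v -> xi y v -> xi u x.
Proof.
  intros Hxy Huv Hyv. apply F_xi. apply F_xi in Hyv. intros a b c Hb Hc.
  symmetry. exact (Hyv a c b (F_sle x y a c Hxy Hc) (F_sle u v a b Huv Hb)).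
Qed.

Lemma mul_meet_distr_r x y u : xi x y -> mul (meet x y) u = meet (mul x u) (mul y u).
Proof.
  intros Hxy. apply F_xi in Hxy.
  apply F_inj. rewrite F_mul, !F_meet, !F_mul. apply rel_ext. intros a b. split.
  - intros [c [[Hx Hy] Hu]]. split; exists c; auto.
  - intros [[c [Hx Hu]] [d [Hy _]]].
    rewrite <- (Hxy a c d Hx Hy) in Hy. exists c. repeat split; auto.
Qed.

Lemma meet_eq_of_derivable x y :
  derivable mul meet xi delta (fun w => w = x) (meet x y) -> meet x y = x.
Proof.
  intros Hd. apply F_inj. rewrite F_meet. apply rel_ext. intros a b. split.
  - intros [Hb _]. exact Hb.
  - intros Hb. destruct (dom_derivable _ _ a Hd) as [c Hc].
    + intros w ->. now exists b.
    + rewrite F_meet in Hc.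
      rewrite (F_functional x a b c Hb (proj1 Hc)). exact Hc.
Qed.

Lemma xi_of_derivable x y :
  derivable mul meet xi delta (fun w => w = x \/ w = y) (meet x y) -> xi x y.
Proof.
  intros Hd. apply F_xi. intros a b c Hb Hc.
  destruct (dom_derivable _ _ a Hd) as [d Hd'].
  - intros w [-> | ->]; eexists; eauto.
  - rewrite F_meet in Hd'. destruct Hd' as [Hx Hy].
    rewrite (F_functional x a b d Hb Hx). exact (F_functional y a d c Hy Hc).
Qed.

Lemma delta_of_derivable x y :
  derivable mul meet xi delta (fun w => w = x) (mul x y) -> delta x y.
Proof.
  intros Hd. apply F_delta. intros a b Hb.
  destruct (dom_derivable _ _ a Hd) as [c Hc].
  - intros w ->. now exists b.
  - rewrite F_mul in Hc. destruct Hc as [d [Hd' Hc]].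
    rewrite (F_functional x a b d Hb Hd'). now exists c.
Qed.

End Necessity.

Section Sufficiency.

Context {G : Type} (mul meet : G -> G -> G) (xi delta : G -> G -> Prop).

Hypothesis mul_assoc : forall x y z, mul x (mul y z) = mul (mul x y) z.
Hypothesis meet_assoc : forall x y z, meet x (meet y z) = meet (meet x y) z.
Hypothesis meet_comm : forall x y, meet x y = meet y x.
Hypothesis meet_idem : forall x, meet x x = x.
Hypothesis xi_mul_l : forall x u v, xi u v -> xi (mul x u) (mul x v).
Hypothesis xi_of_sle : forall x y, sle meet x y -> xi x y.
Hypothesis delta_mul_l : forall x y u, delta x y -> delta (mul u x) y.
Hypothesis mul_meet_distr_l : forall x y z, mul x (meet y z) = meet (mul x y) (mul x z).
Hypothesis xi_sle_antitone :
  forall x y u v, sle meet x y -> sle meet u v -> xi y v -> xi u x.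
Hypothesis mul_meet_distr_r :
  forall x y u, xi x y -> mul (meet x y) u = meet (mul x u) (mul y u).
Hypothesis meet_eq_of_derivable :
  forall x y, derivable mul meet xi delta (fun w => w = x) (meet x y) -> meet x y = x.
Hypothesis xi_of_derivable :
  forall x y, derivable mul meet xi delta (fun w => w = x \/ w = y) (meet x y) -> xi x y.
Hypothesis delta_of_derivable :
  forall x y, derivable mul meet xi delta (fun w => w = x) (mul x y) -> delta x y.

Local Notation der := (derivable mul meet xi delta).

Lemma sle_refl x : sle meet x x.
Proof. apply meet_idem. Qed.

Lemma sle_meet_l x y : sle meet (meet x y) x.
Proof. unfold sle. now rewrite (meet_comm x y), <- meet_assoc, meet_idem. Qed.

Lemma sle_meet_r x y : sle meet (meet x y) y.
Proof. unfold sle. now rewrite <- meet_assoc, meet_idem. Qed.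

Lemma sle_meet x y z : sle meet x y -> sle meet x z -> sle meet x (meet y z).
Proof. unfold sle. intros Hy Hz. now rewrite meet_assoc, Hy, Hz. Qed.

Lemma sle_trans x y z : sle meet x y -> sle meet y z -> sle meet x z.
Proof. unfold sle. intros Hxy Hyz. now rewrite <- Hxy, <- meet_assoc, Hyz. Qed.

Lemma sle_mul_r x y u : sle meet x y -> sle meet (mul x u) (mul y u).
Proof.
  intros Hxy. unfold sle. rewrite <- mul_meet_distr_r by now apply xi_of_sle.
  now rewrite Hxy.
Qed.

Lemma xi_refl x : xi x x.
Proof. apply xi_of_sle, sle_refl. Qed.

Lemma derivable_mul_inv H x y : der H (mul x y) -> der H x.
Proof.
  intros Hxy. apply (derivable_node _ _ _ _ H (mul x y) (mul x y) None None (Some y));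
    auto using xi_refl.
  split; [exact I|]. apply sle_meet_l.
Qed.

Lemma derivable_sle H x y : sle meet x y -> der H x -> der H y.
Proof.
  intros Hxy Hx. apply (derivable_node _ _ _ _ H x x None None None); auto using xi_refl.
  split; [exact I|]. cbn. now rewrite meet_idem.
Qed.

Lemma derivable_meet H x y : xi x y -> der H x -> der H y -> der H (meet x y).
Proof.
  intros Hxy Hx Hy. apply (derivable_node _ _ _ _ H x y None None None); auto.
  split; [exact I|]. apply sle_refl.
Qed.

Lemma derivable_meet_mul H x y u :
  der H (meet x y) -> der H (mul y u) -> der H (mul (meet x y) u).
Proof.
  intros Hxy Hyu.
  apply (derivable_node _ _ _ _ H (meet x y) y (Some u) None None); auto.
  - apply xi_of_sle, sle_meet_r.
  - split; [exact I|]. cbn. rewrite (sle_meet_r x y). apply sle_refl.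
Qed.

Lemma derivable_mul H x y : delta x y -> der H x -> der H (mul x y).
Proof.
  intros Hxy Hx.
  apply (derivable_node _ _ _ _ H x x None (Some y) None); auto using xi_refl.
  split; cbn; rewrite meet_idem; [exact Hxy | apply sle_refl].
Qed.

Definition lact (a : option G) (x : G) : G :=
  match a with Some a => mul a x | None => x end.

Lemma lact_mul a x y : lact a (mul x y) = mul (lact a x) y.
Proof. destruct a; cbn; auto. Qed.

Lemma lact_meet a x y : lact a (meet x y) = meet (lact a x) (lact a y).
Proof. destruct a; cbn; auto. Qed.

Definition eps (H : G -> Prop) (a b : option G) : Prop :=
  a = b \/ exists p q, a = Some p /\ b = Some q /\ der H (meet p q).

Lemma eps_refl H a : eps H a a.
Proof. now left. Qed.

Lemma eps_sym H a b : eps H a b -> eps H b a.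
Proof.
  intros [-> | [p [q [-> [-> Hpq]]]]]; [apply eps_refl|].
  right. exists q, p. now rewrite meet_comm.
Qed.

Lemma eps_trans H a b c : eps H a b -> eps H b c -> eps H a c.
Proof.
  intros [-> | [p [q [-> [-> Hpq]]]]] Hbc; [exact Hbc|].
  destruct Hbc as [<- | [q' [r [[= <-] [-> Hqr]]]]]; [right; now exists p, q|].
  right. exists p, r. split; [reflexivity|split; [reflexivity|]].
  (* p ∧ r lies above (q ∧ r) ∧ (p ∧ q), and q ∧ r ↓ p ∧ q as both are below q *)
  apply (derivable_sle H (meet (meet q r) (meet p q))).
  - apply sle_meet.
    + apply (sle_trans _ (meet p q)); [apply sle_meet_r | apply sle_meet_l].
    + apply (sle_trans _ (meet q r)); [apply sle_meet_l | apply sle_meet_r].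
  - apply derivable_meet; auto.
    apply (xi_sle_antitone (meet p q) q (meet q r) q);
      [apply sle_meet_r | apply sle_meet_l | apply xi_refl].
Qed.

Lemma eps_class_eq H a b : eps H a = eps H b <-> eps H a b.
Proof.
  split.
  - intros Hab. rewrite Hab. apply eps_refl.
  - intros Hab. apply functional_extensionality. intros c.
    apply propositional_extensionality.
    split; intros Hc; eauto using eps_trans, eps_sym.
Qed.

Lemma eps_none H b : eps H None b -> b = None.
Proof. now intros [<- | [p [q [Hp _]]]]. Qed.

Lemma eps_meet_l H x y : der H (meet x y) -> eps H (Some (meet x y)) (Some x).
Proof. intros Hxy. right. exists (meet x y), x. now rewrite (sle_meet_l x y). Qed.

Lemma derivable_of_eps H x y : eps H (Some x) (Some y) -> der H x -> der H (meet x y).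
Proof.
  intros [[= <-] | [p [q [[= <-] [[= <-] Hxy]]]]] Hx; [now rewrite meet_idem | exact Hxy].
Qed.

Lemma eps_lact H a b x : eps H a b -> der H (lact a x) ->
  der H (lact b x) /\ eps H (Some (lact a x)) (Some (lact b x)).
Proof.
  intros [<- | [p [q [-> [-> Hpq]]]]] Hpx; [split; [exact Hpx | apply eps_refl]|].
  cbn in *.
  assert (Hqpx : der H (mul (meet q p) x)).
  { apply derivable_meet_mul; [now rewrite meet_comm | exact Hpx]. }
  split.
  - apply (derivable_sle H _ _ (sle_mul_r _ _ x (sle_meet_l q p)) Hqpx).
  - right. exists (mul p x), (mul q x). split; [reflexivity|split; [reflexivity|]].
    apply (derivable_sle H _ _ (sle_meet _ _ _ (sle_mul_r _ _ x (sle_meet_r q p))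
                                               (sle_mul_r _ _ x (sle_meet_l q p))) Hqpx).
Qed.

(* A class is stored as the predicate [eps H a]; [rep] only relates states whose
   second component has this form. *)
Definition state : Type := ((G -> Prop) * (option G -> Prop))%type.

Definition rep (x : G) (s s' : state) : Prop :=
  let (H, P) := s in let (H', Q) := s' in
  H' = H /\ exists a, P = eps H a /\ der H (lact a x) /\ Q = eps H (Some (lact a x)).

Lemma rep_functional x : transformation (rep x).
Proof.
  intros [H P] [H1 Q1] [H2 Q2] [-> [a [-> [Ha ->]]]] [-> [b [Hab [_ ->]]]].
  f_equal. apply eps_class_eq. apply eps_class_eq in Hab.
  exact (proj2 (eps_lact H a b x Hab Ha)).
Qed.

Lemma rep_base (H : G -> Prop) x : H x -> rep x (H, eps H None) (H, eps H (Some x)).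
Proof. intros Hx. split; [reflexivity|]. exists None. cbn. auto using derivable_base. Qed.

Lemma rep_mul x y : rep (mul x y) = tcomp (rep x) (rep y).
Proof.
  apply rel_ext. intros [H P] [H' Q]. split.
  - intros [-> [a [-> [Ha ->]]]]. rewrite lact_mul in Ha |- *.
    exists (H, eps H (Some (lact a x))). split.
    + split; [reflexivity|]. exists a. eauto using derivable_mul_inv.
    + split; [reflexivity|]. exists (Some (lact a x)). auto.
  - intros [[H1 M] [[-> [a [-> [Ha ->]]]] [-> [b [Hb [Hby ->]]]]]].
    apply eps_class_eq, eps_sym in Hb.
    destruct (eps_lact H b (Some (lact a x)) y Hb Hby) as [Haxy Heq].
    split; [reflexivity|]. exists a. rewrite lact_mul.
    split; [reflexivity|split; [exact Haxy|]]. now apply eps_class_eq.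
Qed.

Lemma rep_meet x y : rep (meet x y) = tcap (rep x) (rep y).
Proof.
  apply rel_ext. intros [H P] [H' Q]. split.
  - intros [-> [a [-> [Ha ->]]]]. rewrite lact_meet in Ha |- *.
    split; (split; [reflexivity|]); exists a; (split; [reflexivity|]).
    + split; [exact (derivable_sle H _ _ (sle_meet_l _ _) Ha)|].
      now apply eps_class_eq, eps_meet_l.
    + split; [exact (derivable_sle H _ _ (sle_meet_r _ _) Ha)|].
      rewrite meet_comm in Ha |- *. now apply eps_class_eq, eps_meet_l.
  - intros [[-> [a [-> [Hax ->]]]] [_ [b [Hab [Hby Hb]]]]].
    apply eps_class_eq, eps_sym in Hab.
    destruct (eps_lact H b a y Hab Hby) as [Hay Hbay].
    apply eps_class_eq in Hb.
    assert (Haxy : der H (meet (lact a x) (lact a y)))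
      by exact (derivable_of_eps H _ _ (eps_trans H _ _ _ Hb Hbay) Hax).
    split; [reflexivity|]. exists a. rewrite lact_meet.
    split; [reflexivity|split; [exact Haxy|]].
    apply eps_class_eq, eps_sym, eps_meet_l, Haxy.
Qed.

Lemma meet_eq_of_rep_eq x y : rep x = rep y -> meet x y = x.
Proof.
  intros Hxy. pose proof (rep_base (fun w => w = x) x eq_refl) as Hx.
  rewrite Hxy in Hx. destruct Hx as [_ [b [Hb [_ Hxb]]]].
  apply eps_class_eq, eps_none in Hb. subst b.
  apply eps_class_eq in Hxb. cbn in Hxb.
  destruct Hxb as [[= <-] | [p [q [[= <-] [[= <-] Hpq]]]]];
    [apply meet_idem | now apply meet_eq_of_derivable].
Qed.

Lemma rep_inj x y : rep x = rep y -> x = y.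
Proof.
  intros Hxy. rewrite <- (meet_eq_of_rep_eq x y Hxy), meet_comm.
  exact (meet_eq_of_rep_eq y x (eq_sym Hxy)).
Qed.

Lemma rep_xi x y : xi x y <-> xiT (rep x) (rep y).
Proof.
  split.
  - intros Hxy [H P] [H1 Q1] [H2 Q2] [-> [a [-> [Hax ->]]]] [-> [b [Hab [Hby ->]]]].
    apply eps_class_eq, eps_sym in Hab.
    destruct (eps_lact H b a y Hab Hby) as [Hay Hbay].
    f_equal. apply eps_class_eq.
    apply (eps_trans H _ (Some (lact a y))); [|now apply eps_sym].
    right. exists (lact a x), (lact a y). repeat split.
    apply derivable_meet; auto. destruct a; cbn; auto.
  - intros Hxy. set (H := fun w => w = x \/ w = y).
    pose proof (Hxy _ _ _ (rep_base H x (or_introl eq_refl))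
                         (rep_base H y (or_intror eq_refl))) as Heq.
    injection Heq as Heq. apply eps_class_eq in Heq.
    destruct Heq as [[= <-] | [p [q [[= <-] [[= <-] Hpq]]]]];
      [apply xi_refl | now apply xi_of_derivable].
Qed.

Lemma rep_delta x y : delta x y <-> deltaT (rep x) (rep y).
Proof.
  split.
  - intros Hxy [H P] [H' Q] [-> [a [-> [Hax ->]]]].
    exists (H, eps H (Some (mul (lact a x) y))). split; [reflexivity|].
    exists (Some (lact a x)). repeat split. apply derivable_mul; auto.
    destruct a; cbn; auto.
  - intros Hxy. set (H := fun w => w = x).
    destruct (Hxy _ _ (rep_base H x eq_refl)) as [[H' Q] [_ [b [Hb [Hby _]]]]].
    apply eps_class_eq, eps_sym in Hb.
    now apply delta_of_derivable, (eps_lact H _ _ y Hb).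
Qed.

Lemma representable_of_derivable_axioms : representable mul meet xi delta.
Proof.
  exists state. split; [exact (inhabits (fun _ => False, fun _ => False))|].
  exists (fun f => exists x, rep x = f), rep. repeat split.
  - intros f [x <-]. apply rep_functional.
  - intros f g [x <-] [y <-]. exists (mul x y). apply rep_mul.
  - intros f g [x <-] [y <-]. exists (meet x y). apply rep_meet.
  - intros x. now exists x.
  - intros f [x <-]. now exists x.
  - exact rep_inj.
  - exact rep_mul.
  - exact rep_meet.
  - apply rep_xi.
  - apply rep_xi.
  - apply rep_delta.
  - apply rep_delta.
Qed.

End Sufficiency.

Definition representability_conditions {G : Type} (mul meet : G -> G -> G)
  (xi delta : G -> G -> Prop) : Prop :=
  ((forall x u v, xi u v -> xi (mul x u) (mul x v)) /\
   (forall x y, sle meet x y -> xi x y)) /\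
  (forall x y u, delta x y -> delta (mul u x) y) /\
  ((forall x y z, mul x (meet y z) = meet (mul x y) (mul x z)) /\
   (forall x y u v, sle meet x y -> sle meet u v -> xi y v -> xi u x) /\
   (forall x y u, xi x y -> mul (meet x y) u = meet (mul x u) (mul y u))) /\
  (forall n, 1 <= n -> forall x y,
     (Xn mul meet xi delta n (meet x y) (fun w => w = x) -> meet x y = x) /\
     (Xn mul meet xi delta n (meet x y) (fun w => w = x \/ w = y) -> xi x y) /\
     (Xn mul meet xi delta n (mul x y) (fun w => w = x) -> delta x y)).

Lemma representability_conditions_of_iso {G A : Type} (mul meet : G -> G -> G)
  (xi delta : G -> G -> Prop) (Phi : (A -> A -> Prop) -> Prop) (F : G -> A -> A -> Prop) :
  cap_semigroup_of_transformations Phi -> is_iso mul meet xi delta Phi F ->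
  representability_conditions mul meet xi delta.
Proof.
  intros [Phi_functional _] [PhiF [_ [F_inj [F_mul [F_meet [F_xi F_delta]]]]]].
  assert (F_functional : forall x, transformation (F x))
    by (intros x; exact (Phi_functional _ (PhiF x))).
  split; [split|split; [|split; [split; [|split]|]]]; intros *.
  - eapply xi_mul_l; eassumption.
  - eapply xi_of_sle; eassumption.
  - eapply delta_mul_l; eassumption.
  - eapply mul_meet_distr_l; eassumption.
  - eapply xi_sle_antitone; eassumption.
  - eapply mul_meet_distr_r; eassumption.
  - intros Hn x y. split; [|split]; intros HX; apply Xn_derivable in HX; auto.
    + eapply meet_eq_of_derivable; eassumption.
    + eapply xi_of_derivable; eassumption.
    + eapply delta_of_derivable; eassumption.
Qed.

Lemma representable_of_conditions {G : Type} (mul meet : G -> G -> G)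
  (xi delta : G -> G -> Prop)
  (mul_assoc : forall x y z, mul x (mul y z) = mul (mul x y) z)
  (meet_assoc : forall x y z, meet x (meet y z) = meet (meet x y) z)
  (meet_comm : forall x y, meet x y = meet y x)
  (meet_idem : forall x, meet x x = x) :
  representability_conditions mul meet xi delta -> representable mul meet xi delta.
Proof.
  intros [[Hxi_mul Hxi_sle] [Hdelta_mul [[Hdistr_l [Hantitone Hdistr_r]] HX]]].
  assert (xi_refl : forall x, xi x x) by (intros x; apply Hxi_sle, meet_idem).
  assert (HXn : forall H w, derivable mul meet xi delta H w ->
            exists n, 1 <= n /\ Xn mul meet xi delta n w H).
  { intros H w Hw.
    destruct (derivable_Xn_eventually mul meet xi delta H w xi_refl meet_idem Hw)
      as [n [Hn Hm]].
    exists n. auto. }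
  apply representable_of_derivable_axioms; auto; intros x y Hd;
    destruct (HXn _ _ Hd) as [n [Hn Hn']]; apply (HX n Hn x y), Hn'.
Qed.

Theorem theorem2 (G : Type) (mul meet : G -> G -> G) (xi delta : G -> G -> Prop)
  (mul_assoc : forall x y z, mul x (mul y z) = mul (mul x y) z)
  (meet_assoc : forall x y z, meet x (meet y z) = meet (meet x y) z)
  (meet_comm : forall x y, meet x y = meet y x)
  (meet_idem : forall x, meet x x = x) :
  representable mul meet xi delta <->
  ( (* (1) *)
    ((forall x u v, xi u v -> xi (mul x u) (mul x v)) /\
     (forall x y, sle meet x y -> xi x y)) /\
    (* (2) *)
    (forall x y u, delta x y -> delta (mul u x) y) /\
    (* (3) *)
    ((forall x y z, mul x (meet y z) = meet (mul x y) (mul x z)) /\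
     (forall x y u v, sle meet x y -> sle meet u v -> xi y v -> xi u x) /\
     (forall x y u, xi x y -> mul (meet x y) u = meet (mul x u) (mul y u))) /\
    (* (4) *)
    (forall n, 1 <= n -> forall x y,
       (Xn mul meet xi delta n (meet x y) (fun w => w = x) -> meet x y = x) /\
       (Xn mul meet xi delta n (meet x y) (fun w => w = x \/ w = y) -> xi x y) /\
       (Xn mul meet xi delta n (mul x y) (fun w => w = x) -> delta x y)) ).
Proof.
  split.
  - intros [A [_ [Phi [F [HPhi HF]]]]].
    exact (representability_conditions_of_iso mul meet xi delta Phi F HPhi HF).
  - exact (representable_of_conditions mul meet xi delta
             mul_assoc meet_assoc meet_comm meet_idem).
Qed.
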